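(* Let $S$ be a localizable left Ore set in a ring $R$. Then there exists a pair $(Q,f)$, with $Q$ a ring and $f:R\to Q$ a ring homomorphism, such that (i) $f(s)$ is a unit of $Q$ for all $s\in S$, and for every pair $(Q',f')$ satisfying (i) there is a unique ring homomorphism $h:Q\to Q'$ with $f'=hf$. The ring $Q$ is unique up to isomorphism, and $Q$ is isomorphic to the left localization of $R/\mathfrak p(S)$ at $\pi(S)$, where $\pi:R\to R/\mathfrak p(S)$ is the canonical map and $\pi(S)$ is a left denominator set of $R/\mathfrak p(S)$ with $\mathrm{ass}(\pi(S))=0$.
   Context: Rings are associative with $1$. A multiplicatively closed subset $S$ ($1\in S$, $0\notin S$) is a left Ore set if $Sr\cap Rs\ne\emptyset$ for all $r\in R,s\in S$; it is a left denominator set if moreover $rs=0$ ($s\in S$) implies $tr=0$ for some $t\in S$; $\mathrm{ass}(S):=\{r\mid sr=0\text{ for some }s\in S\}$. A left Ore set $S$ is localizable if there is a ring homomorphism $\varphi:R\to R'$ to a nonzero ring $R'$ with $\varphi(s)$ a unit for all $s\in S$. For a ring $B$ and $T\subseteq B$, $\mathrm{ass}_l(T,B):=\{b\mid tb=0\text{ for some }t\in T\}$, $\mathrm{ass}_r(T,B):=\{b\mid bt=0\text{ for some }t\in T\}$. Define ideals $\mathfrak p_\alpha$ ($\alpha\ge1$ ordinals): $\mathfrak p_1:=\mathrm{ass}_l(S,R)+\mathrm{ass}_r(S,R)R$; $\mathfrak p_{\alpha+1}:=\pi_\alpha^{-1}(\mathrm{ass}_l(\pi_\alpha(S),R/\mathfrak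 p_\alpha)+\mathrm{ass}_r(\pi_\alpha(S),R/\mathfrak p_\alpha)\cdot(R/\mathfrak p_\alpha))$ with $\pi_\alpha:R\to R/\mathfrak p_\alpha$ canonical; $\mathfrak p_\alpha:=\bigcup_{\beta<\alpha}\mathfrak p_\beta$ for limit $\alpha$; $\mathfrak p(S):=\bigcup_\alpha\mathfrak p_\alpha$. *)

From HB Require Import structures.
From mathcomp Require Import all_boot all_order all_algebra.
Set Implicit Arguments. Unset Strict Implicit. Unset Printing Implicit Defensive.
Import GRing.Theory.
Local Open Scope ring_scope.

Section Defs.
Variable R : pzRingType.

Definition is_unit (x : R) : Prop := exists y : R, x * y = 1 /\ y * x = 1.

Definition mult_closed (S : R -> Prop) : Prop :=
  S 1 /\ ~ S 0 /\ (forall s t, S s -> S t -> S (s * t)).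

Definition left_ore (S : R -> Prop) : Prop :=
  mult_closed S /\
  (forall (r s : R), S s -> exists (s' r' : R), S s' /\ s' * r = r' * s).

Definition left_denominator (S : R -> Prop) : Prop :=
  left_ore S /\
  (forall (r s : R), S s -> r * s = 0 -> exists t, S t /\ t * r = 0).

Definition ass (S : R -> Prop) (r : R) : Prop := exists s, S s /\ s * r = 0.

(* The ideal p(S) := union over ordinals alpha >= 1 of p_alpha.
   Unfolding the quotient R/p_alpha: r \in p_(alpha+1) iff
   r = a + \sum_i b_i x_i  with  s a \in p_alpha (or s a = 0 at stage 0)
   and b_i s_i \in p_alpha (or = 0 at stage 0) for some s, s_i \in S.
   The transfinite union of this increasing chain is the least fixed point,
   represented here by an inductive predicate. *)
Inductive pS (S : R -> Prop) : R -> Prop :=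
  | pS_intro (r a : R) (l : seq (R * R)) :
      (exists s, S s /\ (s * a = 0 \/ pS S (s * a))) ->
      (forall bx, bx \in l -> exists s, S s /\ (bx.1 * s = 0 \/ pS S (bx.1 * s))) ->
      r = a + \sum_(bx <- l) bx.1 * bx.2 ->
      pS S r.

End Defs.

Definition inverts (R Q : pzRingType) (S : R -> Prop) (f : {rmorphism R -> Q}) :=
  forall s, S s -> is_unit (f s).

Definition localizable (R : pzRingType) (S : R -> Prop) : Prop :=
  exists (R' : nzRingType) (phi : {rmorphism R -> R'}), inverts S phi.

Definition universal_inverting (R Q : pzRingType) (S : R -> Prop)
    (f : {rmorphism R -> Q}) : Prop :=
  forall (Q' : pzRingType) (f' : {rmorphism R -> Q'}), inverts S f' ->
    exists h : {rmorphism Q -> Q'},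
      (forall r, f' r = h (f r)) /\
      (forall h' : {rmorphism Q -> Q'}, (forall r, f' r = h' (f r)) -> forall q, h' q = h q).

Definition ring_iso (A B : pzRingType) : Prop :=
  exists h : {rmorphism A -> B}, bijective h.

(* pi : R -> A is (up to iso) the canonical map R -> R/I: surjective with kernel I *)
Definition quotient_map (R A : pzRingType) (pi : {rmorphism R -> A}) (I : R -> Prop) :=
  (forall a : A, exists r, pi r = a) /\ (forall r, pi r = 0 <-> I r).

Definition image_p (R A : pzRingType) (pi : {rmorphism R -> A}) (S : R -> Prop) : A -> Prop :=
  fun x => exists s, S s /\ pi s = x.

(* sigma : A -> L is a left localization (left ring of fractions) of A at T
   (Goodearl-Warfield style definition): sigma(t) units, every element is
   sigma(t)^{-1} sigma(a), and ker sigma = ass(T). *)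
Definition is_left_localization (A L : pzRingType) (T : A -> Prop)
    (sigma : {rmorphism A -> L}) : Prop :=
  (forall t, T t -> is_unit (sigma t)) /\
  (forall q : L, exists (t a : A) (u : L),
      T t /\ u * sigma t = 1 /\ sigma t * u = 1 /\ q = u * sigma a) /\
  (forall a, sigma a = 0 <-> ass T a).

From HB Require Import structures.
From mathcomp Require Import all_boot all_order all_algebra.
From mathcomp Require Import boolp.
Set Implicit Arguments. Unset Strict Implicit. Unset Printing Implicit Defensive.
Import GRing.Theory.
Local Open Scope ring_scope.
Local Open Scope quotient_scope.

(* Every ring map f inverting S kills p(S): if s a or b s is killed then so are
   a and b, since f s is a unit. Hence S-inverting maps are exactly the maps
   factoring through A = R/p(S) and inverting the image T of S. By construction
   p(S) is saturated under these cancellations, so T is a regular left Ore set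
   of A and A has a classical left ring of fractions T^-1 A, built from pairs
   (t, a) standing for t^-1 a; it is universal among T-inverting maps, hence
   R -> T^-1 A is universal among S-inverting maps. Localizability of S is only
   used to see that 0 is not in T, i.e. that T is a denominator set. *)

Record setoid_ring (X : Type) (E : X -> X -> Prop) (z o : X) (opp : X -> X)
  (add mul : X -> X -> X) : Prop := SetoidRing {
  sr_refl : forall x, E x x;
  sr_sym : forall x y, E x y -> E y x;
  sr_trans : forall x y w, E x y -> E y w -> E x w;
  sr_addE : forall x x' y y', E x x' -> E y y' -> E (add x y) (add x' y');
  sr_oppE : forall x x', E x x' -> E (opp x) (opp x');
  sr_mulE : forall x x' y y', E x x' -> E y y' -> E (mul x y) (mul x' y');
  sr_addA : forall x y w, E (add x (add y w)) (add (add x y) w);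
  sr_addC : forall x y, E (add x y) (add y x);
  sr_add0 : forall x, E (add z x) x;
  sr_addN : forall x, E (add (opp x) x) z;
  sr_mulA : forall x y w, E (mul x (mul y w)) (mul (mul x y) w);
  sr_mul1l : forall x, E (mul o x) x;
  sr_mul1r : forall x, E (mul x o) x;
  sr_mulDl : forall x y w, E (mul (add x y) w) (add (mul x w) (mul y w));
  sr_mulDr : forall x y w, E (mul x (add y w)) (add (mul x y) (mul x w))
}.

Section SetoidQuotient.
Variables (X : choiceType) (E : X -> X -> Prop) (z o : X) (opp : X -> X) (add mul : X -> X -> X).
Variable H : setoid_ring E z o opp add mul.

Definition setoid_rel : rel X := fun x y => `[< E x y >].

Lemma setoid_rel_equiv : equiv_class_of setoid_rel.
Proof.
split=> [x|x y|x y w]; rewrite /setoid_rel.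
- exact/asboolP/(sr_refl H).
- by apply/asboolP/asboolP; apply: (sr_sym H).
- by move=> /asboolP h1 /asboolP h2; apply/asboolP; apply: (sr_trans H h1 h2).
Qed.

Definition setoid_equiv := EquivRelPack setoid_rel_equiv.
Definition setoid_quot := {eq_quot setoid_equiv}.
HB.instance Definition _ := Choice.copy setoid_quot {eq_quot setoid_equiv}.
Definition setoid_class (x : X) : setoid_quot := \pi x.

Lemma setoid_classP x y : setoid_class x = setoid_class y <-> E x y.
Proof. by split=> [/eqmodP/asboolP|h]; [|apply/eqmodP/asboolP]. Qed.

Definition sq_add (p q : setoid_quot) := setoid_class (add (repr p) (repr q)).
Definition sq_mul (p q : setoid_quot) := setoid_class (mul (repr p) (repr q)).
Definition sq_opp (p : setoid_quot) := setoid_class (opp (repr p)).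

Lemma repr_setoid_class x : E (repr (setoid_class x)) x.
Proof. by apply/setoid_classP; rewrite /setoid_class reprK. Qed.

Lemma setoid_quotW (P : setoid_quot -> Prop) :
  (forall x, P (setoid_class x)) -> forall q, P q.
Proof. exact: quotW. Qed.

Let classE x y : E x y -> setoid_class x = setoid_class y.
Proof. by move/setoid_classP. Qed.

Lemma sq_oppE x : sq_opp (setoid_class x) = setoid_class (opp x).
Proof. by apply/classE/(sr_oppE H)/repr_setoid_class. Qed.
Lemma sq_addE x y : sq_add (setoid_class x) (setoid_class y) = setoid_class (add x y).
Proof. by apply/classE/(sr_addE H); apply: repr_setoid_class. Qed.
Lemma sq_mulE x y : sq_mul (setoid_class x) (setoid_class y) = setoid_class (mul x y).
Proof. by apply/classE/(sr_mulE H); apply: repr_setoid_class. Qed.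

Lemma sq_addA : associative sq_add.
Proof.
by elim/setoid_quotW=> x; elim/setoid_quotW=> y; elim/setoid_quotW=> w;
  rewrite !sq_addE; apply/classE/(sr_addA H).
Qed.
Lemma sq_addC : commutative sq_add.
Proof.
by elim/setoid_quotW=> x; elim/setoid_quotW=> y; rewrite !sq_addE; apply/classE/(sr_addC H).
Qed.
Lemma sq_add0 : left_id (setoid_class z) sq_add.
Proof. by elim/setoid_quotW=> x; rewrite sq_addE; apply/classE/(sr_add0 H). Qed.
Lemma sq_addN : left_inverse (setoid_class z) sq_opp sq_add.
Proof. by elim/setoid_quotW=> x; rewrite sq_oppE sq_addE; apply/classE/(sr_addN H). Qed.

HB.instance Definition _ := GRing.isZmodule.Build setoid_quot sq_addA sq_addC sq_add0 sq_addN.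

Lemma sq_mulA : associative sq_mul.
Proof.
by elim/setoid_quotW=> x; elim/setoid_quotW=> y; elim/setoid_quotW=> w;
  rewrite !sq_mulE; apply/classE/(sr_mulA H).
Qed.
Lemma sq_mul1l : left_id (setoid_class o) sq_mul.
Proof. by elim/setoid_quotW=> x; rewrite sq_mulE; apply/classE/(sr_mul1l H). Qed.
Lemma sq_mul1r : right_id (setoid_class o) sq_mul.
Proof. by elim/setoid_quotW=> x; rewrite sq_mulE; apply/classE/(sr_mul1r H). Qed.
Lemma sq_mulDl : left_distributive sq_mul sq_add.
Proof.
by elim/setoid_quotW=> x; elim/setoid_quotW=> y; elim/setoid_quotW=> w;
  rewrite !(sq_addE, sq_mulE); apply/classE/(sr_mulDl H).
Qed.
Lemma sq_mulDr : right_distributive sq_mul sq_add.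
Proof.
by elim/setoid_quotW=> x; elim/setoid_quotW=> y; elim/setoid_quotW=> w;
  rewrite !(sq_addE, sq_mulE); apply/classE/(sr_mulDr H).
Qed.

HB.instance Definition _ :=
  GRing.Zmodule_isPzRing.Build setoid_quot sq_mulA sq_mul1l sq_mul1r sq_mulDl sq_mulDr.

Lemma setoid_class0 : setoid_class z = 0. Proof. by []. Qed.
Lemma setoid_classD x y : setoid_class (add x y) = setoid_class x + setoid_class y.
Proof. by rewrite -sq_addE. Qed.
Lemma setoid_classM x y : setoid_class (mul x y) = setoid_class x * setoid_class y.
Proof. by rewrite -sq_mulE. Qed.

End SetoidQuotient.

Definition is_rmorph (A B : pzRingType) (f : A -> B) : Prop :=
  [/\ f 0 = 0, {morph f : x y / x + y}, f 1 = 1 & {morph f : x y / x * y}].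

Section RMorphismOf.
Variables (A B : pzRingType) (f : A -> B) (hf : is_rmorph f).

(* The dummy dependency on hf keeps the canonical instances below attached to
   this copy of f only. *)
Definition rmorph_of_fun := (fun _ : is_rmorph f => f) hf.
HB.instance Definition _ := GRing.isNmodMorphism.Build A B rmorph_of_fun
  (let: And4 f0 fD _ _ := hf in (f0, fD)).
HB.instance Definition _ := GRing.isMonoidMorphism.Build A B rmorph_of_fun
  (let: And4 _ _ f1 fM := hf in (f1, fM)).
Definition rmorph_of : {rmorphism A -> B} := rmorph_of_fun.

Lemma rmorph_ofE x : rmorph_of x = f x. Proof. by []. Qed.

End RMorphismOf.

Section QuotientMapFactor.
Variables (R A B : pzRingType) (I : R -> Prop) (pi : {rmorphism R -> A}).
Hypothesis pi_quot : quotient_map pi I.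

Lemma quotient_map_factor (f : {rmorphism R -> B}) :
  (forall r, I r -> f r = 0) -> exists g : {rmorphism A -> B}, forall r, g (pi r) = f r.
Proof.
move=> fI; have [pi_surj pi_ker] := pi_quot.
pose lift a := projT1 (cid (pi_surj a)).
have liftK a : pi (lift a) = a by rewrite /lift; case: cid.
have f_pi r r' : pi r = pi r' -> f r = f r'.
  move=> e; apply/eqP; rewrite -subr_eq0 -rmorphB; apply/eqP/fI/pi_ker.
  by rewrite rmorphB e subrr.
have hf : is_rmorph (f \o lift).
  split=> [|x y|| x y] /=.
  - by rewrite (f_pi _ 0) ?rmorph0 ?liftK.
  - by rewrite -rmorphD; apply: f_pi; rewrite rmorphD !liftK.
  - by rewrite (f_pi _ 1) ?rmorph1 ?liftK.
  - by rewrite -rmorphM; apply: f_pi; rewrite rmorphM !liftK.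
by exists (rmorph_of hf) => r; apply: f_pi; rewrite liftK.
Qed.

End QuotientMapFactor.

Lemma seq_mono_bound (T : eqType) (P : nat -> T -> Prop) (s : seq T) :
  (forall n m x, (n <= m)%N -> P n x -> P m x) ->
  (forall x, x \in s -> exists n, P n x) -> exists N, forall x, x \in s -> P N x.
Proof.
move=> Pmono; elim: s => [|y s IHs] Ps; first by exists 0%N.
have [n Pny] := Ps y (mem_head _ _).
have [N PN] : exists N, forall x, x \in s -> P N x.
  by apply: IHs => x xs; apply: Ps; rewrite in_cons xs orbT.
exists (maxn n N) => x; rewrite in_cons => /orP [/eqP ->|xs].
  exact: Pmono (leq_maxl _ _) Pny.
exact: Pmono (leq_maxr _ _) (PN _ xs).
Qed.

Section OreIdeal.
Variables (R : pzRingType) (S : R -> Prop) (HS : left_ore S).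

Lemma ore_S1 : S 1. Proof. by case: HS => [[]]. Qed.
Lemma ore_SM s t : S s -> S t -> S (s * t). Proof. by case: HS => [[_ [_ SM]]] _; apply: SM. Qed.
Lemma ore_cond r s : S s -> exists s' r', S s' /\ s' * r = r' * s.
Proof. by case: HS => _ ore; apply: ore. Qed.

(* The stages p_n of the chain defining p(S), with p_0 = 0. The first omega
   stages already exhaust p(S), and inside a fixed stage closure under
   addition can be proved by induction on n. *)
Fixpoint pS_stage (n : nat) (r : R) : Prop :=
  match n with
  | 0 => r = 0
  | n'.+1 => exists a (l : seq (R * R)),
      (exists s, S s /\ pS_stage n' (s * a)) /\
      (forall bx, bx \in l -> exists s, S s /\ pS_stage n' (bx.1 * s)) /\
      r = a + \sum_(bx <- l) bx.1 * bx.2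
  end.

Lemma pS_stageS n r : pS_stage n r -> pS_stage n.+1 r.
Proof.
elim: n r => [|n IHn] r /=.
  move=> ->; exists 0, [::]; split; first by exists 1; rewrite mulr0; split=> //; apply: ore_S1.
  by split=> //; rewrite big_nil addr0.
move=> [a [l [[s [Ss sa]] [bl ->]]]]; exists a, l; split; first by exists s; split=> //; apply: IHn.
by split=> // bx /bl [t [St bt]]; exists t; split=> //; apply: IHn.
Qed.

Lemma pS_stage_le n m r : (n <= m)%N -> pS_stage n r -> pS_stage m r.
Proof.
move=> /subnKC <-; elim: (m - n)%N => [|k IHk]; first by rewrite addn0.
by move=> h; rewrite addnS; apply/pS_stageS/IHk.
Qed.

Lemma pS_stage_mull n x r : pS_stage n r -> pS_stage n (x * r).
Proof.
elim: n x r => [|n IHn] x r /=; first by move=> ->; rewrite mulr0.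
move=> [a [l [[s [Ss sa]] [bl ->]]]].
exists (x * a), [seq (x * bx.1, bx.2) | bx <- l]; split.
  have [s' [x' [Ss' e]]] := ore_cond x Ss.
  by exists s'; split=> //; rewrite mulrA e -mulrA; apply: IHn.
split.
  move=> _ /mapP [bx bxl ->] /=; have [t [St bt]] := bl _ bxl.
  by exists t; split=> //; rewrite -mulrA; apply: IHn.
rewrite mulrDr big_map big_distrr /=; congr (_ + _).
by apply: eq_bigr => bx _; rewrite mulrA.
Qed.

Lemma pS_stage_mulr n r y : pS_stage n r -> pS_stage n (r * y).
Proof.
elim: n r y => [|n IHn] r y /=; first by move=> ->; rewrite mul0r.
move=> [a [l [[s [Ss sa]] [bl ->]]]].
exists (a * y), [seq (bx.1, bx.2 * y) | bx <- l]; split.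
  by exists s; split=> //; rewrite mulrA; apply: IHn.
split; first by move=> _ /mapP [bx bxl ->]; apply: bl bxl.
rewrite mulrDl big_map big_distrl /=; congr (_ + _).
by apply: eq_bigr => bx _; rewrite mulrA.
Qed.

Lemma pS_stageD n r r' : pS_stage n r -> pS_stage n r' -> pS_stage n (r + r').
Proof.
elim: n r r' => [|n IHn] r r' /=; first by move=> -> ->; rewrite addr0.
move=> [a [l [[s [Ss sa]] [bl ->]]]] [a' [l' [[s' [Ss' sa']] [bl' ->]]]].
exists (a + a'), (l ++ l'); split.
  have [u [v [Su e]]] := ore_cond s Ss'.
  exists (u * s); split; first exact: ore_SM.
  by rewrite mulrDr -mulrA e -mulrA; apply: IHn; apply: pS_stage_mull.
split; first by move=> bx; rewrite mem_cat => /orP [/bl|/bl'].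
by rewrite big_cat /= addrACA.
Qed.

Lemma pS_elim (P : R -> Prop) :
  (forall r a (l : seq (R * R)),
     (exists s, S s /\ (s * a = 0 \/ P (s * a))) ->
     (forall bx, bx \in l -> exists s, S s /\ (bx.1 * s = 0 \/ P (bx.1 * s))) ->
     r = a + \sum_(bx <- l) bx.1 * bx.2 -> P r) ->
  forall r, pS S r -> P r.
Proof.
move=> IHP; fix IH 2; move=> r [{}r a l sa bl e]; apply: (IHP r a l _ _ e).
  by case: sa => s [Ss [sa|sa]]; exists s; split=> //; [left|right; apply: IH sa].
move=> bx /bl [s [Ss [bs|bs]]]; exists s; split=> //; [by left|right; apply: IH bs].
Qed.

Lemma pS_stageP r : pS S r <-> exists n, pS_stage n r.
Proof.
split; last first.
  move=> [n]; elim: n r => [|n IHn] r /=.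
    move=> ->; apply: (@pS_intro _ _ 0 0 [::]); rewrite ?big_nil ?addr0 //.
    by exists 1; split; [apply: ore_S1|left; rewrite mulr0].
  move=> [a [l [[s [Ss sa]] [bl ->]]]]; apply: pS_intro (erefl _).
    by exists s; split=> //; right; apply: IHn.
  by move=> bx /bl [t [St bt]]; exists t; split=> //; right; apply: IHn.
move: r; apply: pS_elim => r a l [s [Ss sa]] bl ->.
have [n san] : exists n, pS_stage n (s * a) by case: sa => [->|//]; exists 0%N.
have [N blN] : exists N, forall bx, bx \in l -> exists t, S t /\ pS_stage N (bx.1 * t).
  apply: seq_mono_bound => [n' m bx le [t [St bt]]|bx /bl [t [St [bt|[n' bt]]]]].
  - by exists t; split=> //; apply: pS_stage_le bt.
  - by exists 0%N, t.
  - by exists n', t.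
exists (maxn n N).+1, a, l; split.
  by exists s; split=> //; apply: pS_stage_le san; apply: leq_maxl.
by split=> // bx /blN [t [St bt]]; exists t; split=> //; apply: pS_stage_le bt; apply: leq_maxr.
Qed.

Lemma pS0 : pS S 0.
Proof. by apply/pS_stageP; exists 0%N. Qed.

Lemma pSD r r' : pS S r -> pS S r' -> pS S (r + r').
Proof.
move=> /pS_stageP [n rn] /pS_stageP [m r'm]; apply/pS_stageP; exists (maxn n m).
by apply: pS_stageD; [apply: pS_stage_le rn|apply: pS_stage_le r'm];
  rewrite ?leq_maxl ?leq_maxr.
Qed.

Lemma pS_mull x r : pS S r -> pS S (x * r).
Proof. by move=> /pS_stageP [n rn]; apply/pS_stageP; exists n; apply: pS_stage_mull. Qed.

Lemma pS_mulr r y : pS S r -> pS S (r * y).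
Proof. by move=> /pS_stageP [n rn]; apply/pS_stageP; exists n; apply: pS_stage_mulr. Qed.

Lemma pSN r : pS S r -> pS S (- r).
Proof. by rewrite -mulN1r; apply: pS_mull. Qed.

Lemma pS_cancelSl s a : S s -> pS S (s * a) -> pS S a.
Proof.
move=> Ss sa; apply: (@pS_intro _ _ a a [::]); rewrite ?big_nil ?addr0 //.
by exists s; split=> //; right.
Qed.

Lemma pS_cancelSr s b : S s -> pS S (b * s) -> pS S b.
Proof.
move=> Ss bs; apply: (@pS_intro _ _ b 0 [:: (b, 1)]).
- by exists 1; split; [apply: ore_S1|left; rewrite mulr0].
- by move=> bx; rewrite mem_seq1 => /eqP -> /=; exists s; split=> //; right.
- by rewrite big_seq1 /= mulr1 add0r.
Qed.

Lemma pS_ker (B : pzRingType) (f : {rmorphism R -> B}) :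
  inverts S f -> forall r, pS S r -> f r = 0.
Proof.
move=> finv; apply: pS_elim => r a l [s [Ss sa]] bl ->.
rewrite rmorphD rmorph_sum /=.
have -> : f a = 0.
  have [y [_ ys]] := finv _ Ss.
  have : f (s * a) = 0 by case: sa => ->; rewrite ?rmorph0.
  by rewrite rmorphM => fsa; rewrite -[f a]mul1r -ys -mulrA fsa mulr0.
rewrite add0r big1_seq // => bx /andP [_ /bl [t [St bt]]]; rewrite rmorphM.
have [y [ty _]] := finv _ St.
have : f (bx.1 * t) = 0 by case: bt => ->; rewrite ?rmorph0.
by rewrite rmorphM => fbt; rewrite -[f bx.1]mulr1 -ty mulrA fbt !mul0r.
Qed.

End OreIdeal.

Lemma localizable_pS_S (R : pzRingType) (S : R -> Prop) s :
  localizable S -> S s -> ~ pS S s.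
Proof.
move=> [R' [phi phi_inv]] Ss /(pS_ker phi_inv) phis0.
have [y [phisy _]] := phi_inv _ Ss.
by move: phisy; rewrite phis0 mul0r => /esym/eqP; rewrite oner_eq0.
Qed.

Section QuotientByPS.
Variables (R : pzRingType) (S : R -> Prop) (HS : left_ore S).

Definition pS_equiv (x y : R) := pS S (x - y).

Lemma pS_setoid_ring : setoid_ring pS_equiv 0 1 (@GRing.opp R) +%R *%R.
Proof.
have pS_eq x y : x = y -> pS_equiv x y by move=> ->; rewrite /pS_equiv subrr; apply: pS0.
split.
- by move=> x; apply: pS_eq.
- by move=> x y xy; rewrite /pS_equiv -opprB; apply: pSN.
- by move=> x y w xy yw; rewrite /pS_equiv -[x](subrK y) -addrA; apply: pSD.
- by move=> x x' y y' xx' yy'; rewrite /pS_equiv opprD addrACA; apply: pSD.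
- by move=> x x' xx'; rewrite /pS_equiv -opprD; apply: pSN.
- move=> x x' y y'; rewrite /pS_equiv => xx' yy'.
  have -> : x * y - x' * y' = (x - x') * y + x' * (y - y').
    by rewrite mulrBl mulrBr addrA subrK.
  by apply: (pSD HS); [apply: (pS_mulr HS)|apply: (pS_mull HS)].
- by move=> x y w; apply/pS_eq/addrA.
- by move=> x y; apply/pS_eq/addrC.
- by move=> x; apply/pS_eq/add0r.
- by move=> x; apply/pS_eq/addNr.
- by move=> x y w; apply/pS_eq/mulrA.
- by move=> x; apply/pS_eq/mul1r.
- by move=> x; apply/pS_eq/mulr1.
- by move=> x y w; apply/pS_eq/mulrDl.
- by move=> x y w; apply/pS_eq/mulrDr.
Qed.

Definition pS_quot : pzRingType := setoid_quot pS_setoid_ring.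

Lemma pS_class_rmorph : is_rmorph (setoid_class pS_setoid_ring).
Proof.
split=> [|x y||x y] //.
- exact: setoid_classD.
- exact: setoid_classM.
Qed.

Definition pS_proj : {rmorphism R -> pS_quot} := rmorph_of pS_class_rmorph.

Lemma pS_proj_quotient_map : quotient_map pS_proj (pS S).
Proof.
split=> [a|r]; first by exists (repr a); rewrite rmorph_ofE /setoid_class reprK.
by rewrite rmorph_ofE -setoid_class0 setoid_classP /pS_equiv subr0.
Qed.

End QuotientByPS.
Record regular_ore (A : pzRingType) (T : A -> Prop) : Prop := RegOre {
  ro_1 : T 1;
  ro_M : forall s t, T s -> T t -> T (s * t);
  ro_ore : forall r s, T s -> exists s' r', T s' /\ s' * r = r' * s;
  ro_regl : forall s a, T s -> s * a = 0 -> a = 0;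
  ro_regr : forall s a, T s -> a * s = 0 -> a = 0
}.

Lemma regular_ore_ass0 (A : pzRingType) (T : A -> Prop) :
  regular_ore T -> forall a, ass T a -> a = 0.
Proof. by move=> HT a [t [Tt ta]]; exact: ro_regl HT _ _ Tt ta. Qed.

Lemma regular_ore_left_denominator (A : pzRingType) (T : A -> Prop) :
  regular_ore T -> ~ T 0 -> left_denominator T.
Proof.
move=> [T1 TM Tore _ Tregr] nT0; split; first by split=> //; split.
by move=> r s Ts /(Tregr _ _ Ts) ->; exists 1; rewrite mulr0.
Qed.

Section OreLocalization.
Variables (A : pzRingType) (T : A -> Prop) (HT : regular_ore T).

Let T1 := ro_1 HT.
Let TM := ro_M HT.
Let Tore := ro_ore HT.

Definition ore_pair (r s : A) : A * A :=
  match pselect (exists p : A * A, T p.1 /\ p.1 * r = p.2 * s) with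
  | left h => projT1 (cid h)
  | right _ => (1, 0)
  end.

Lemma ore_pairP r s : T s -> T (ore_pair r s).1 /\ (ore_pair r s).1 * r = (ore_pair r s).2 * s.
Proof.
move=> Ts; rewrite /ore_pair; case: pselect => [h|nh]; first by case: cid.
exfalso; apply: nh; have [s' [r' [Ts' e]]] := Tore r Ts; by exists (s', r').
Qed.

Lemma ro_canr s x y : T s -> x * s = y * s -> x = y.
Proof.
move=> Ts e; apply/eqP; rewrite -subr_eq0; apply/eqP; apply: (ro_regr HT Ts).
by rewrite mulrBl e subrr.
Qed.

(* A pair (s, a) with T s stands for the left fraction s^-1 a; two pairs are
   equivalent when they agree after left multiplication to a common denominator. *)
Definition frac_eq (p q : A * A) :=
  exists u v, u * p.1 = v * q.1 /\ T (u * p.1) /\ u * p.2 = v * q.2.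

Definition frac_add (p q : A * A) : A * A :=
  let o := ore_pair p.1 q.1 in (o.1 * p.1, o.1 * p.2 + o.2 * q.2).
Definition frac_mul (p q : A * A) : A * A :=
  let o := ore_pair p.2 q.1 in (o.1 * p.1, o.2 * q.2).

Lemma frac_add_den p q : T p.1 -> T q.1 -> T (frac_add p q).1.
Proof. by move=> Tp Tq; apply: TM => //; case: (ore_pairP p.1 Tq). Qed.
Lemma frac_mul_den p q : T p.1 -> T q.1 -> T (frac_mul p q).1.
Proof. by move=> Tp Tq; apply: TM => //; case: (ore_pairP p.2 Tq). Qed.

Lemma frac_eq_refl p : T p.1 -> frac_eq p p.
Proof. by move=> Tp; exists 1, 1; rewrite !mul1r. Qed.

Lemma frac_eq_sym p q : frac_eq p q -> frac_eq q p.
Proof. by move=> [u [v [e1 [Tu e2]]]]; exists v, u; rewrite -e1. Qed.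

Lemma frac_eq_trans p q w : T q.1 -> frac_eq p q -> frac_eq q w -> frac_eq p w.
Proof.
case: p => s a; case: q => t b; case: w => p c.
rewrite /frac_eq /= => Tt [u [v [e1 [Tus e2]]]] [u' [v' [e1' [Tut e2']]]].
have [s' [r' [Ts' e]]] := Tore (v * t) Tut.
have svr : s' * v = r' * u' by apply: (ro_canr Tt); rewrite -!mulrA e.
exists (s' * u), (r' * v'); split; last split.
- by rewrite -!mulrA e1 e e1'.
- by rewrite -mulrA; apply: TM.
- by rewrite -!mulrA e2 mulrA svr -mulrA e2'.
Qed.

Lemma frac_eq_of_eq s a t b : T s -> s = t -> a = b -> frac_eq (s, a) (t, b).
Proof. by move=> Ts <- <-; apply: frac_eq_refl. Qed.

Lemma frac_eq_expand s a u : T (u * s) -> frac_eq (s, a) (u * s, u * a).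
Proof. by move=> Tus; exists u, 1; rewrite !mul1r. Qed.

Lemma frac_add_common s a t b u v : T s -> T t -> u * s = v * t -> T (u * s) ->
  frac_eq (frac_add (s, a) (t, b)) (u * s, u * a + v * b).
Proof.
move=> Ts Tt euv Tus; rewrite /frac_add /=.
move: (ore_pairP s Tt); case: (ore_pair s t) => u0 v0 /= [Tu0 e0].
have [p [q [Tp epq]]] := Tore (u0 * s) Tus.
exists p, q => /=; split; first exact: epq.
split; first by apply: TM => //; apply: TM.
have h1 : p * u0 = q * u by apply: (ro_canr Ts); rewrite -!mulrA.
have h2 : p * v0 = q * v by apply: (ro_canr Tt); rewrite -!mulrA -e0 epq euv.
by rewrite !mulrDr !mulrA h1 h2.
Qed.

Lemma frac_mul_common s a t b u a' : T s -> T t -> u * a = a' * t -> T (u * s) ->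
  frac_eq (frac_mul (s, a) (t, b)) (u * s, a' * b).
Proof.
move=> Ts Tt euv Tus; rewrite /frac_mul /=.
move: (ore_pairP a Tt); case: (ore_pair a t) => u0 a0 /= [Tu0 e0].
have [p [q [Tp epq]]] := Tore (u0 * s) Tus.
exists p, q => /=; split; first exact: epq.
split; first by apply: TM => //; apply: TM.
have h1 : p * u0 = q * u by apply: (ro_canr Ts); rewrite -!mulrA.
have h2 : p * a0 = q * a' by apply: (ro_canr Tt); rewrite -!mulrA -e0 -euv !mulrA h1.
by rewrite !mulrA h2.
Qed.

Lemma frac_addC x y : T x.1 -> T y.1 -> frac_eq (frac_add x y) (frac_add y x).
Proof.
case: x => s a; case: y => t b /= Ts Tt; have [u [v [Tu e]]] := Tore s Tt.
have Tus : T (u * s) by apply: TM.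
have Tvt : T (v * t) by rewrite -e.
apply: (@frac_eq_trans _ (u * s, u * a + v * b)) => //; first exact: frac_add_common.
apply: (@frac_eq_trans _ (v * t, v * b + u * a)) => //.
  by apply: frac_eq_of_eq => //; rewrite addrC.
by apply: frac_eq_sym; apply: frac_add_common.
Qed.

Lemma frac_add_eql x x' y : T x.1 -> T x'.1 -> T y.1 -> frac_eq x x' ->
  frac_eq (frac_add x y) (frac_add x' y).
Proof.
case: x => s a; case: x' => s1 a1; case: y => t b /=.
move=> Ts Ts1 Tt [p [q [/= e1 [Tw e2]]]].
have [al [be [Tal ea]]] := Tore (p * s) Tt.
have T1' : T (al * p * s) by rewrite -mulrA; apply: TM.
have T2' : T (al * q * s1) by rewrite -mulrA -e1 ?mulrA -?mulrA; apply: TM.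
apply: (@frac_eq_trans _ (al * p * s, al * p * a + be * b)) => //.
  by apply: frac_add_common => //; rewrite -mulrA.
apply: (@frac_eq_trans _ (al * q * s1, al * q * a1 + be * b)) => //.
  by apply: frac_eq_of_eq => //; rewrite -!mulrA ?e1 ?e2.
by apply: frac_eq_sym; apply: frac_add_common => //; rewrite -mulrA -e1.
Qed.

Lemma frac_add_eqr x y y' : T x.1 -> T y.1 -> T y'.1 -> frac_eq y y' ->
  frac_eq (frac_add x y) (frac_add x y').
Proof.
move=> Ts Tt Tt1 h.
apply: (@frac_eq_trans _ (frac_add y x)); first by apply: frac_add_den.
  exact: frac_addC.
apply: (@frac_eq_trans _ (frac_add y' x)); first by apply: frac_add_den.
  exact: frac_add_eql.
exact: frac_addC.
Qed.

Lemma frac_mul_eql x x' y : T x.1 -> T x'.1 -> T y.1 -> frac_eq x x' ->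
  frac_eq (frac_mul x y) (frac_mul x' y).
Proof.
case: x => s a; case: x' => s1 a1; case: y => t b /=.
move=> Ts Ts1 Tt [p [q [/= e1 [Tw e2]]]].
have [al [a2 [Tal ea]]] := Tore (p * a) Tt.
have T1' : T (al * p * s) by rewrite -mulrA; apply: TM.
have T2' : T (al * q * s1) by rewrite -mulrA -e1; apply: TM.
apply: (@frac_eq_trans _ (al * p * s, a2 * b)) => //.
  by apply: frac_mul_common => //; rewrite -mulrA.
apply: (@frac_eq_trans _ (al * q * s1, a2 * b)) => //.
  by apply: frac_eq_of_eq => //; rewrite -!mulrA e1.
by apply: frac_eq_sym; apply: frac_mul_common => //; rewrite -mulrA -e2.
Qed.

Lemma frac_mul_eqr x y y' : T x.1 -> T y.1 -> T y'.1 -> frac_eq y y' ->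
  frac_eq (frac_mul x y) (frac_mul x y').
Proof.
case: x => s a; case: y => t b; case: y' => t1 b1 /=.
move=> Ts Tt Tt1 [p [q [/= e1 [Tw e2]]]].
have [al [c [Tal ea]]] := Tore a Tw.
have T1' : T (al * s) by apply: TM.
apply: (@frac_eq_trans _ (al * s, c * p * b)) => //.
  by apply: frac_mul_common => //; rewrite -mulrA.
apply: (@frac_eq_trans _ (al * s, c * q * b1)) => //.
  by apply: frac_eq_of_eq => //; rewrite -!mulrA e2.
by apply: frac_eq_sym; apply: frac_mul_common => //; rewrite -mulrA -e1.
Qed.

Lemma frac_addA s a t b p c : T s -> T t -> T p ->
  frac_eq (frac_add (s, a) (frac_add (t, b) (p, c))) (frac_add (frac_add (s, a) (t, b)) (p, c)).
Proof.
move=> Ts Tt Tp.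
have [u [v [Tu e]]] := Tore s Tt.
have Tus : T (u * s) by apply: TM.
have [al [be [Tal ea]]] := Tore (u * s) Tp.
have Tavt : T (al * v * t) by rewrite -mulrA -e; apply: TM.
have Taus : T (al * u * s) by rewrite -mulrA; apply: TM.
have Taus' : T (al * (u * s)) by apply: TM.
apply: (@frac_eq_trans _ (frac_add (s, a) (al * v * t, al * v * b + be * c)));
  first by apply: frac_add_den.
  apply: frac_add_eqr => //; try by apply: frac_add_den.
  by apply: frac_add_common => //; rewrite -mulrA -e.
apply: (@frac_eq_trans _ (al * u * s, al * u * a + 1 * (al * v * b + be * c))) => //.
  by apply: frac_add_common => //; rewrite mul1r -!mulrA e.
apply: (@frac_eq_trans _ (al * (u * s), al * (u * a + v * b) + be * c)) => //.
  by apply: frac_eq_of_eq; rewrite ?mulrA // mul1r mulrDr !mulrA addrA.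
apply: (@frac_eq_trans _ (frac_add (u * s, u * a + v * b) (p, c))); first by apply: frac_add_den.
  by apply: frac_eq_sym; apply: frac_add_common.
apply: frac_eq_sym; apply: frac_add_eql => //; try by apply: frac_add_den.
exact: frac_add_common.
Qed.

Lemma frac_add0 s a : T s -> frac_eq (frac_add (1, 0) (s, a)) (s, a).
Proof.
move=> Ts; have T1s : T (s * 1) by rewrite mulr1.
apply: (@frac_eq_trans _ (s * 1, s * 0 + 1 * a)) => //.
  by apply: frac_add_common => //; rewrite mulr1 mul1r.
by apply: frac_eq_of_eq; rewrite ?mulr1 ?mulr0 ?add0r ?mul1r.
Qed.

Lemma frac_addN s a : T s -> frac_eq (frac_add (s, - a) (s, a)) (1, 0).
Proof.
move=> Ts; have T1s : T (1 * s) by rewrite mul1r.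
apply: (@frac_eq_trans _ (1 * s, 1 * - a + 1 * a)) => //.
  exact: frac_add_common.
by exists 1, s; rewrite /= !mul1r mulr1 addNr mulr0.
Qed.

Lemma frac_mulA s a t b p c : T s -> T t -> T p ->
  frac_eq (frac_mul (s, a) (frac_mul (t, b) (p, c))) (frac_mul (frac_mul (s, a) (t, b)) (p, c)).
Proof.
move=> Ts Tt Tp.
have [u1 [b' [Tu1 e1]]] := Tore b Tp.
have Tu1t : T (u1 * t) by apply: TM.
have [u2 [a2 [Tu2 e2]]] := Tore a Tu1t.
have Tu2s : T (u2 * s) by apply: TM.
apply: (@frac_eq_trans _ (frac_mul (s, a) (u1 * t, b' * c))); first by apply: frac_mul_den.
  apply: frac_mul_eqr => //; try by apply: frac_mul_den.
  exact: frac_mul_common.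
apply: (@frac_eq_trans _ (u2 * s, a2 * (b' * c))) => //.
  exact: frac_mul_common.
apply: (@frac_eq_trans _ (1 * (u2 * s), a2 * b' * c)); first by rewrite mul1r.
  by apply: frac_eq_of_eq; rewrite ?mul1r ?mulrA.
apply: (@frac_eq_trans _ (frac_mul (u2 * s, a2 * u1 * b) (p, c))); first by apply: frac_mul_den.
  apply: frac_eq_sym; apply: frac_mul_common => //; first by rewrite mul1r -!mulrA e1.
  by rewrite mul1r.
apply: frac_eq_sym; apply: frac_mul_eql => //; try by apply: frac_mul_den.
by apply: frac_mul_common => //; rewrite e2 !mulrA.
Qed.

Lemma frac_mul1l s a : T s -> frac_eq (frac_mul (1, 1) (s, a)) (s, a).
Proof.
move=> Ts; have T1s : T (s * 1) by rewrite mulr1.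
apply: (@frac_eq_trans _ (s * 1, 1 * a)) => //.
  by apply: frac_mul_common => //; rewrite mulr1 mul1r.
by apply: frac_eq_of_eq; rewrite ?mulr1 ?mul1r.
Qed.

Lemma frac_mul1r s a : T s -> frac_eq (frac_mul (s, a) (1, 1)) (s, a).
Proof.
move=> Ts; have T1s : T (1 * s) by rewrite mul1r.
apply: (@frac_eq_trans _ (1 * s, a * 1)) => //.
  by apply: frac_mul_common => //; rewrite mulr1 mul1r.
by apply: frac_eq_of_eq; rewrite ?mulr1 ?mul1r.
Qed.

Lemma frac_mulDl s a t b p c : T s -> T t -> T p ->
  frac_eq (frac_mul (frac_add (s, a) (t, b)) (p, c))
    (frac_add (frac_mul (s, a) (p, c)) (frac_mul (t, b) (p, c))).
Proof.
move=> Ts Tt Tp.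
have [u [v [Tu e]]] := Tore s Tt.
have Tus : T (u * s) by apply: TM.
have [al [d [Tal ed]]] := Tore (u * a + v * b) Tp.
have Taus : T (al * (u * s)) by apply: TM.
have [be [e' [Tbe ee]]] := Tore (al * (u * a)) Tp.
have Tbaus : T (be * (al * (u * s))) by apply: TM.
have TM1 : T (be * al * u * s) by rewrite -!mulrA.
have TM2 : T (be * al * v * t) by rewrite -!mulrA -e.
apply: (@frac_eq_trans _ (frac_mul (u * s, u * a + v * b) (p, c))); first by apply: frac_mul_den.
  apply: frac_mul_eql => //; try by apply: frac_add_den.
  exact: frac_add_common.
apply: (@frac_eq_trans _ (al * (u * s), d * c)) => //.
  exact: frac_mul_common.
apply: (@frac_eq_trans _ (be * (al * (u * s)), be * (d * c))) => //.
  exact: frac_eq_expand.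
apply: (@frac_eq_trans _ (1 * (be * al * u * s), 1 * (e' * c) + 1 * ((be * d - e') * c)));
  first by rewrite mul1r.
  by apply: frac_eq_of_eq; rewrite ?mul1r -?mulrA // -mulrDl addrC subrK mulrA.
apply: (@frac_eq_trans _ (frac_add (be * al * u * s, e' * c) (be * al * v * t, (be * d - e') * c)));
  first by apply: frac_add_den.
  apply: frac_eq_sym; apply: frac_add_common => //; rewrite ?mul1r // -!mulrA e //.
apply: frac_eq_sym.
apply: (@frac_eq_trans _ (frac_add (be * al * u * s, e' * c) (frac_mul (t, b) (p, c))));
  first by apply: frac_add_den => //; apply: frac_mul_den.
  apply: frac_add_eql => //; try by apply: frac_mul_den.
  by apply: frac_mul_common => //; rewrite -!mulrA.
apply: frac_add_eqr => //; try by apply: frac_mul_den.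
apply: frac_mul_common => //.
by rewrite mulrBl -[be * d * p]mulrA -ed -ee !mulrDr addrAC subrr add0r !mulrA.
Qed.

Lemma frac_mulDr s a t b p c : T s -> T t -> T p ->
  frac_eq (frac_mul (s, a) (frac_add (t, b) (p, c)))
    (frac_add (frac_mul (s, a) (t, b)) (frac_mul (s, a) (p, c))).
Proof.
move=> Ts Tt Tp.
have [u [v [Tu e]]] := Tore t Tp.
have Tut : T (u * t) by apply: TM.
have [al [d [Tal ed]]] := Tore a Tut.
have Tas : T (al * s) by apply: TM.
apply: (@frac_eq_trans _ (frac_mul (s, a) (u * t, u * b + v * c))); first by apply: frac_mul_den.
  apply: frac_mul_eqr => //; try by apply: frac_add_den.
  exact: frac_add_common.
apply: (@frac_eq_trans _ (al * s, d * (u * b + v * c))) => //.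
  exact: frac_mul_common.
apply: (@frac_eq_trans _ (1 * (al * s), 1 * (d * u * b) + 1 * (d * v * c))); first by rewrite mul1r.
  by apply: frac_eq_of_eq; rewrite ?mul1r // mulrDr !mulrA.
apply: (@frac_eq_trans _ (frac_add (al * s, d * u * b) (al * s, d * v * c)));
  first by apply: frac_add_den.
  by apply: frac_eq_sym; apply: frac_add_common => //; rewrite mul1r.
apply: frac_eq_sym.
apply: (@frac_eq_trans _ (frac_add (al * s, d * u * b) (frac_mul (s, a) (p, c))));
  first by apply: frac_add_den => //; apply: frac_mul_den.
  apply: frac_add_eql => //; try by apply: frac_mul_den.
  by apply: frac_mul_common => //; rewrite -mulrA.
apply: frac_add_eqr => //; try by apply: frac_mul_den.
by apply: frac_mul_common => //; rewrite ed -!mulrA e.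
Qed.

Definition frac := {p : A * A | T p.1}.
HB.instance Definition _ := gen_eqMixin frac.
HB.instance Definition _ := gen_choiceMixin frac.

Definition frac_equiv (x y : frac) := frac_eq (proj1_sig x) (proj1_sig y).
Definition frac0 : frac := exist _ (1, 0) T1.
Definition frac1 : frac := exist _ (1, 1) T1.
Definition fracN (x : frac) : frac := exist _ ((proj1_sig x).1, - (proj1_sig x).2) (proj2_sig x).
Definition fracD (x y : frac) : frac := exist _ _ (frac_add_den (proj2_sig x) (proj2_sig y)).
Definition fracM (x y : frac) : frac := exist _ _ (frac_mul_den (proj2_sig x) (proj2_sig y)).

Lemma frac_setoid_ring : setoid_ring frac_equiv frac0 frac1 fracN fracD fracM.
Proof.
split; rewrite /frac_equiv.
- by move=> [x Tx]; apply: frac_eq_refl.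
- by move=> x y; apply: frac_eq_sym.
- by move=> x [y Ty] w /=; apply: frac_eq_trans.
- move=> [x Tx] [x' Tx'] [y Ty] [y' Ty'] /= xx' yy'.
  apply: (@frac_eq_trans _ (frac_add x' y)); first exact: frac_add_den.
    exact: frac_add_eql.
  exact: frac_add_eqr.
- move=> [[s a] Ts] [[s' a'] Ts'] /= [u [v [e1 [Tus e2]]]].
  by exists u, v; rewrite /= !mulrN e2.
- move=> [x Tx] [x' Tx'] [y Ty] [y' Ty'] /= xx' yy'.
  apply: (@frac_eq_trans _ (frac_mul x' y)); first exact: frac_mul_den.
    exact: frac_mul_eql.
  exact: frac_mul_eqr.
- by move=> [[s a] Ts] [[t b] Tt] [[p c] Tp]; apply: frac_addA.
- by move=> [[s a] Ts] [[t b] Tt]; apply: frac_addC.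
- by move=> [[s a] Ts]; apply: frac_add0.
- by move=> [[s a] Ts]; apply: frac_addN.
- by move=> [[s a] Ts] [[t b] Tt] [[p c] Tp]; apply: frac_mulA.
- by move=> [[s a] Ts]; apply: frac_mul1l.
- by move=> [[s a] Ts]; apply: frac_mul1r.
- by move=> [[s a] Ts] [[t b] Tt] [[p c] Tp]; apply: frac_mulDl.
- by move=> [[s a] Ts] [[t b] Tt] [[p c] Tp]; apply: frac_mulDr.
Qed.

Definition ore_loc : pzRingType := setoid_quot frac_setoid_ring.

Definition ore_frac s a (Ts : T s) : ore_loc :=
  setoid_class frac_setoid_ring (exist _ (s, a) Ts).

Lemma ore_fracP s a t b (Ts : T s) (Tt : T t) :
  ore_frac a Ts = ore_frac b Tt <-> frac_eq (s, a) (t, b).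
Proof. exact: setoid_classP. Qed.

Lemma ore_fracE s a t b (Ts : T s) (Tt : T t) :
  s = t -> a = b -> ore_frac a Ts = ore_frac b Tt.
Proof. by move=> st ab; apply/ore_fracP; apply: frac_eq_of_eq. Qed.

Lemma ore_frac_add s a t b u v (Ts : T s) (Tt : T t) (Tus : T (u * s)) :
  u * s = v * t -> ore_frac a Ts + ore_frac b Tt = ore_frac (u * a + v * b) Tus.
Proof. by move=> e; rewrite -setoid_classD; apply/setoid_classP/frac_add_common. Qed.

Lemma ore_frac_mul s a t b u a' (Ts : T s) (Tt : T t) (Tus : T (u * s)) :
  u * a = a' * t -> ore_frac a Ts * ore_frac b Tt = ore_frac (a' * b) Tus.
Proof. by move=> e; rewrite -setoid_classM; apply/setoid_classP/frac_mul_common. Qed.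

Lemma ore_frac_id s (Ts : T s) : ore_frac s Ts = 1.
Proof. by apply/ore_fracP; exists 1, s; rewrite !mul1r mulr1. Qed.

Definition ore_embed_fun (a : A) : ore_loc := ore_frac a T1.

Lemma ore_embed_rmorph : is_rmorph ore_embed_fun.
Proof.
have T11 : T (1 * 1) by rewrite mulr1.
split=> [|x y||x y] //.
- rewrite /ore_embed_fun (@ore_frac_add _ _ _ _ 1 1 _ _ T11) //.
  by apply: ore_fracE; rewrite ?mul1r.
- rewrite /ore_embed_fun (@ore_frac_mul _ _ _ _ 1 x _ _ T11) ?mul1r ?mulr1 //.
  by apply: ore_fracE; rewrite ?mul1r.
Qed.

Definition ore_embed : {rmorphism A -> ore_loc} := rmorph_of ore_embed_rmorph.

Lemma ore_frac_invl s (Ts : T s) : ore_frac 1 Ts * ore_embed s = 1.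
Proof.
have T1s : T (1 * s) by rewrite mul1r.
rewrite rmorph_ofE (@ore_frac_mul _ _ _ _ 1 1 _ _ T1s) ?mulr1 //.
by rewrite -(ore_frac_id T1s); apply: ore_fracE; rewrite ?mul1r.
Qed.

Lemma ore_frac_invr s (Ts : T s) : ore_embed s * ore_frac 1 Ts = 1.
Proof.
have T11 : T (1 * 1) by rewrite mulr1.
rewrite rmorph_ofE (@ore_frac_mul _ _ _ _ 1 1 _ _ T11) ?mul1r //.
by rewrite -(ore_frac_id T1); apply: ore_fracE; rewrite ?mul1r.
Qed.

Lemma ore_frac_embed s a (Ts : T s) : ore_frac a Ts = ore_frac 1 Ts * ore_embed a.
Proof.
have T1s : T (1 * s) by rewrite mul1r.
rewrite rmorph_ofE (@ore_frac_mul _ _ _ _ 1 1 _ _ T1s) ?mulr1 //.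
by apply: ore_fracE; rewrite ?mul1r.
Qed.

Lemma ore_embed_left_localization : is_left_localization T ore_embed.
Proof.
split; [|split].
- by move=> s Ts; exists (ore_frac 1 Ts); rewrite ore_frac_invl ore_frac_invr.
- elim/setoid_quotW => -[[s a] Ts].
  exists s, a, (ore_frac 1 Ts); rewrite ore_frac_invl ore_frac_invr.
  by split=> //; split=> //; split=> //; apply: ore_frac_embed.
- move=> a; split=> [|/(regular_ore_ass0 HT) ->]; last exact: rmorph0.
  rewrite rmorph_ofE => /(@ore_fracP 1 a 1 0 T1 T1) [u [v [_ [Tu ua]]]].
  by exists u; rewrite /= mulr1 in Tu; rewrite ua mulr0.
Qed.

End OreLocalization.

Section OreLocalizationUniversal.
Variables (A : pzRingType) (T : A -> Prop) (HT : regular_ore T).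

Lemma ore_loc_rmorph_eq (B : pzRingType) (k1 k2 : {rmorphism ore_loc HT -> B}) :
  (forall a, k1 (ore_embed HT a) = k2 (ore_embed HT a)) -> forall q, k1 q = k2 q.
Proof.
move=> k12 q; have [_ [/(_ q) [s [a [u [Ts [us [su ->]]]]]] _]] :=
  ore_embed_left_localization HT.
rewrite !rmorphM k12; congr (_ * _).
have k1us : k1 u * k1 (ore_embed HT s) = 1 by rewrite -rmorphM us rmorph1.
have k2su : k2 (ore_embed HT s) * k2 u = 1 by rewrite -rmorphM su rmorph1.
by rewrite -[LHS]mulr1 -k2su mulrA -k12 k1us mul1r.
Qed.

Variables (B : pzRingType) (phi : {rmorphism A -> B}).
Hypothesis phi_inv : forall t, T t -> is_unit (phi t).

Definition unit_inv (y : B) : B :=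
  if pselect (is_unit y) is left yu then projT1 (cid yu) else 0.

Lemma unit_invP y : is_unit y -> y * unit_inv y = 1 /\ unit_inv y * y = 1.
Proof. by move=> yu; rewrite /unit_inv; case: pselect => // yu'; case: cid. Qed.

Definition frac_eval (p : A * A) : B := unit_inv (phi p.1) * phi p.2.

Lemma frac_eval_expand s a u : T s -> T (u * s) -> frac_eval (u * s, u * a) = frac_eval (s, a).
Proof.
move=> Ts Tus; rewrite /frac_eval /=.
have [_ usV] := unit_invP (phi_inv Tus); have [sV _] := unit_invP (phi_inv Ts).
have usVu : unit_inv (phi (u * s)) * phi u = unit_inv (phi s).
  by rewrite -[RHS]mul1r -usV rmorphM -!mulrA sV mulr1.
by rewrite (rmorphM phi u a) mulrA usVu.
Qed.

Lemma frac_eval_eq p q : T p.1 -> T q.1 -> frac_eq T p q -> frac_eval p = frac_eval q.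
Proof.
case: p q => [s a] [t b] /= Ts Tt [u [v [e1 [Tus e2]]]]; rewrite /= in e1 e2 Tus.
have Tvt : T (v * t) by rewrite -e1.
by rewrite -(frac_eval_expand a Ts Tus) e1 e2 frac_eval_expand.
Qed.

Lemma frac_eval_add s a t b : T s -> T t ->
  frac_eval (frac_add T (s, a) (t, b)) = frac_eval (s, a) + frac_eval (t, b).
Proof.
move=> Ts Tt; rewrite /frac_add /=.
move: (ore_pairP HT s Tt); case: (ore_pair T s t) => u v /= [Tu e].
have Tus : T (u * s) by apply: ro_M.
have Tvt : T (v * t) by rewrite -e.
rewrite -(frac_eval_expand a Ts Tus) -(frac_eval_expand b Tt Tvt) /frac_eval /=.
by rewrite rmorphD mulrDr e.
Qed.

Lemma frac_eval_mul s a t b : T s -> T t ->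
  frac_eval (frac_mul T (s, a) (t, b)) = frac_eval (s, a) * frac_eval (t, b).
Proof.
move=> Ts Tt; rewrite /frac_mul /=.
move: (ore_pairP HT a Tt); case: (ore_pair T a t) => u a' /= [Tu e].
have Tus : T (u * s) by apply: ro_M.
have [tt' _] := unit_invP (phi_inv Tt).
rewrite -(frac_eval_expand a Ts Tus) /frac_eval /= e !rmorphM !mulrA.
by rewrite -[unit_inv _ * _ * _ * _]mulrA tt' mulr1.
Qed.

Definition ore_lift_fun (q : ore_loc HT) : B := frac_eval (proj1_sig (repr q)).

Lemma ore_lift_class x :
  ore_lift_fun (setoid_class (frac_setoid_ring HT) x) = frac_eval (proj1_sig x).
Proof.
rewrite /ore_lift_fun; move: (repr _) (repr_setoid_class (frac_setoid_ring HT) x) => -[p Tp].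
by case: x => q Tq; apply: frac_eval_eq.
Qed.

Lemma frac_eval_1 a : frac_eval (1, a) = phi a.
Proof.
have [u1 _] := unit_invP (ex_intro _ 1 (conj (mulr1 1) (mulr1 1)) : is_unit (1 : B)).
by rewrite /frac_eval /= rmorph1 -[unit_inv 1]mul1r u1 mul1r.
Qed.

Lemma ore_lift_rmorph : is_rmorph ore_lift_fun.
Proof.
split.
- by rewrite ore_lift_class frac_eval_1 rmorph0.
- elim/setoid_quotW=> -[[s a] Ts]; elim/setoid_quotW=> -[[t b] Tt].
  by rewrite -setoid_classD !ore_lift_class frac_eval_add.
- by rewrite ore_lift_class frac_eval_1 rmorph1.
- elim/setoid_quotW=> -[[s a] Ts]; elim/setoid_quotW=> -[[t b] Tt].
  by rewrite -setoid_classM !ore_lift_class frac_eval_mul.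
Qed.

Lemma ore_loc_universal : exists h : {rmorphism ore_loc HT -> B},
  (forall a, phi a = h (ore_embed HT a)) /\
  (forall h' : {rmorphism ore_loc HT -> B},
     (forall a, phi a = h' (ore_embed HT a)) -> forall q, h' q = h q).
Proof.
have h_embed a : rmorph_of ore_lift_rmorph (ore_embed HT a) = phi a.
  by rewrite !rmorph_ofE ore_lift_class frac_eval_1.
exists (rmorph_of ore_lift_rmorph); split=> [a|h' h'phi]; first by rewrite h_embed.
by apply: ore_loc_rmorph_eq => a; rewrite h_embed -h'phi.
Qed.

End OreLocalizationUniversal.

Lemma universal_inverting_iso (R Q1 Q2 : pzRingType) (S : R -> Prop)
    (f1 : {rmorphism R -> Q1}) (f2 : {rmorphism R -> Q2}) :
  inverts S f1 -> universal_inverting S f1 ->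
  inverts S f2 -> universal_inverting S f2 -> ring_iso Q1 Q2.
Proof.
move=> f1inv f1univ f2inv f2univ.
have [h [hf1 _]] := f1univ _ f2 f2inv.
have [k [kf2 _]] := f2univ _ f1 f1inv.
have [h1 [_ f1uniq]] := f1univ _ f1 f1inv.
have [h2 [_ f2uniq]] := f2univ _ f2 f2inv.
have khK : cancel h k.
  move=> q; rewrite -[RHS]/(idfun q) (f1uniq idfun) //.
  by apply: (f1uniq (k \o h)%FUN) => r /=; rewrite -hf1 -kf2.
have hkK : cancel k h.
  move=> q; rewrite -[RHS]/(idfun q) (f2uniq idfun) //.
  by apply: (f2uniq (h \o k)%FUN) => r /=; rewrite -kf2 -hf1.
by exists h; exists k.
Qed.

Section LocalizationModuloPS.
Variables (R : pzRingType) (S : R -> Prop) (HS : left_ore S).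

Variables (A : pzRingType) (pi : {rmorphism R -> A}).
Hypothesis pi_quot : quotient_map pi (pS S).

Lemma quotient_pS_regular_ore : regular_ore (image_p pi S).
Proof.
have [pi_surj pi_ker] := pi_quot.
split.
- by exists 1; split; [apply: ore_S1 HS|rewrite rmorph1].
- move=> _ _ [s [Ss <-]] [t [St <-]]; exists (s * t).
  by rewrite rmorphM; split=> //; apply: ore_SM.
- move=> a _ [s [Ss <-]]; have [r <-] := pi_surj a.
  have [s' [r' [Ss' e]]] := ore_cond HS r Ss.
  by exists (pi s'), (pi r'); rewrite -!rmorphM e; split=> //; exists s'.
- move=> _ b [s [Ss <-]]; have [a <-] := pi_surj b.
  by rewrite -rmorphM => /pi_ker /(pS_cancelSl Ss) /pi_ker.
- move=> _ b [s [Ss <-]]; have [a <-] := pi_surj b.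
  by rewrite -rmorphM => /pi_ker /(pS_cancelSr HS Ss) /pi_ker.
Qed.

Let HT := quotient_pS_regular_ore.

Definition pS_loc_map : {rmorphism R -> ore_loc HT} := ore_embed HT \o pi.

Lemma pS_loc_map_inverts : inverts S pS_loc_map.
Proof.
by move=> s Ss; have [+ _] := ore_embed_left_localization HT; apply; exists s.
Qed.

Lemma pS_loc_map_universal : universal_inverting S pS_loc_map.
Proof.
move=> Q' f' f'inv; have [phi phipi] := quotient_map_factor pi_quot (pS_ker f'inv).
have phi_inv t : image_p pi S t -> is_unit (phi t).
  by move=> [s [Ss <-]]; rewrite phipi; apply: f'inv.
have [h [hphi huniq]] := ore_loc_universal HT phi_inv.
exists h; split=> [r|h' h'f']; first by rewrite -phipi hphi.
apply: huniq => a; have [r <-] := proj1 pi_quot a.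
by rewrite phipi h'f'.
Qed.

End LocalizationModuloPS.

Theorem corollary3p16 (R : pzRingType) (S : R -> Prop)
    (HS : left_ore S) (Hloc : localizable S) :
  exists (Q : pzRingType) (f : {rmorphism R -> Q}),
    inverts S f /\ universal_inverting S f /\
    (forall (Q' : pzRingType) (f' : {rmorphism R -> Q'}),
        inverts S f' -> universal_inverting S f' -> ring_iso Q Q') /\
    (exists (A : pzRingType) (pi : {rmorphism R -> A}), quotient_map pi (pS S)) /\
    (forall (A : pzRingType) (pi : {rmorphism R -> A}), quotient_map pi (pS S) ->
        left_denominator (image_p pi S) /\
        (forall a, ass (image_p pi S) a -> a = 0) /\
        exists (L : pzRingType) (sigma : {rmorphism A -> L}),
          is_left_localization (image_p pi S) sigma /\ ring_iso Q L).
Proof.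
have proj_quot := pS_proj_quotient_map HS.
have f_inv := pS_loc_map_inverts HS proj_quot.
have f_univ := pS_loc_map_universal HS proj_quot.
exists _, (pS_loc_map HS proj_quot); split=> //; split=> //.
split; first by move=> Q' f'; apply: universal_inverting_iso f_inv f_univ.
split; first by exists (pS_quot HS), (pS_proj HS).
move=> A pi pi_quot; pose HT := quotient_pS_regular_ore HS pi_quot.
split; first apply: regular_ore_left_denominator HT _.
  by move=> [s [Ss /(proj2 pi_quot)]]; apply: (localizable_pS_S Hloc Ss).
split; first exact: regular_ore_ass0 HT.
exists (ore_loc HT), (ore_embed HT); split; first exact: ore_embed_left_localization.
exact: universal_inverting_iso f_inv f_univ
  (pS_loc_map_inverts HS pi_quot) (pS_loc_map_universal HS pi_quot).
Qed.
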